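(* Every finitely generated centrally nilpotent brace is supersoluble.
   Context: A brace (skew left brace) is a set $B$ with two binary operations $+$ and $\cdot$ such that $(B,+)$ and $(B,\cdot)$ are groups and $a(b+c)=ab-a+ac$ for all $a,b,c\in B$. A subbrace is a subset that is a subgroup of both groups; $B$ is finitely generated if it is the smallest subbrace containing some finite subset. $\lambda_a(b)=-a+ab$ defines a homomorphism $\lambda\colon(B,\cdot)\to\operatorname{Aut}(B,+)$. An ideal is a subbrace normal in both groups and invariant under all $\lambda_b$; quotients by ideals are braces. $\operatorname{Soc}(B)=\operatorname{Ker}\lambda\cap Z(B,+)$, $\zeta(B)=\operatorname{Soc}(B)\cap Z(B,\cdot)$; $\zeta_0(B)=\{0\}$, $\zeta_{k+1}(B)/\zeta_k(B)=\zeta(B/\zeta_k(B))$; $B$ is centrally nilpotent if $B=\zeta_m(B)$ for some $m$. $B$ is supersoluble if there is a finite chain of ideals $\{0\}=I_0\le\dots\le I_n=B$ such that for each $i$, either $(I_{i+1}/I_i,+)$ is infinite cyclic and $I_{i+1}/I_i\le\operatorname{Soc}(B/I_i)$, or $I_{i+1}/I_i$ has prime order. *)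

From Stdlib Require Import ZArith List Znumtheory.
Import ListNotations.

Record brace := Brace {
  carrier :> Type;
  badd : carrier -> carrier -> carrier;
  bzero : carrier;
  bneg : carrier -> carrier;
  bmul : carrier -> carrier -> carrier;
  bone : carrier;
  binv : carrier -> carrier;
  badd_assoc : forall a b c, badd a (badd b c) = badd (badd a b) c;
  badd_0l : forall a, badd bzero a = a;
  badd_0r : forall a, badd a bzero = a;
  badd_Nl : forall a, badd (bneg a) a = bzero;
  badd_Nr : forall a, badd a (bneg a) = bzero;
  bmul_assoc : forall a b c, bmul a (bmul b c) = bmul (bmul a b) c;
  bmul_1l : forall a, bmul bone a = a;
  bmul_1r : forall a, bmul a bone = a;
  bmul_Vl : forall a, bmul (binv a) a = bone;
  bmul_Vr : forall a, bmul a (binv a) = bone;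
  brace_law : forall a b c,
    bmul a (badd b c) = badd (bmul a b) (badd (bneg a) (bmul a c))
}.

Arguments badd {b} _ _ : rename. Arguments bzero {b} : rename. Arguments bneg {b} _ : rename. Arguments bmul {b} _ _ : rename. Arguments bone {b} : rename. Arguments binv {b} _ : rename.

Section BraceDefs.
Variable B : brace.

Definition bset := B -> Prop.

Definition lam (a b : B) : B := badd (bneg a) (bmul a b).

(* a and b are equal in the quotient by I: a + I = b + I, i.e. -b + a ∈ I *)
Definition cong (I : bset) (a b : B) : Prop := I (badd (bneg b) a).

Definition add_subgroup (S : bset) : Prop :=
  S bzero /\ (forall a b, S a -> S b -> S (badd a b)) /\ (forall a, S a -> S (bneg a)).

Definition mul_subgroup (S : bset) : Prop :=
  S bone /\ (forall a b, S a -> S b -> S (bmul a b)) /\ (forall a, S a -> S (binv a)).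

Definition subbrace (S : bset) : Prop := add_subgroup S /\ mul_subgroup S.

Definition ideal (I : bset) : Prop :=
  subbrace I /\
  (forall a x, I x -> I (badd (badd a x) (bneg a))) /\
  (forall a x, I x -> I (bmul (bmul a x) (binv a))) /\
  (forall b x, I x -> I (lam b x)).

Definition fin_gen : Prop :=
  exists S : list B, forall T : bset, subbrace T ->
    (forall s, In s S -> T s) -> forall x, T x.

(* preimage in B of zeta(B/I) = (Ker lambda ∩ Z(B,+) ∩ Z(B,.)) computed in B/I *)
Definition zeta_mod (I : bset) : bset := fun x =>
  (forall y, cong I (lam x y) y) /\
  (forall y, cong I (badd x y) (badd y x)) /\
  (forall y, cong I (bmul x y) (bmul y x)).

Fixpoint zeta (k : nat) : bset :=
  match k with
  | O => fun x => x = bzero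
  | S k' => zeta_mod (zeta k')
  end.

Definition centrally_nilpotent : Prop := exists m : nat, forall x : B, zeta m x.

Fixpoint nmul (n : nat) (g : B) : B :=
  match n with O => bzero | S n' => badd g (nmul n' g) end.

Definition zmul (z : Z) (g : B) : B :=
  match z with
  | Z0 => bzero
  | Zpos p => nmul (Pos.to_nat p) g
  | Zneg p => bneg (nmul (Pos.to_nat p) g)
  end.

(* (J/I,+) is infinite cyclic (I ⊆ J): generated by the class of some g ∈ J
   whose class has infinite order *)
Definition quot_inf_cyclic (J I : bset) : Prop :=
  exists g, J g /\
    (forall x, J x -> exists z : Z, cong I x (zmul z g)) /\
    (forall z : Z, I (zmul z g) -> z = 0%Z).

(* J/I ≤ Soc(B/I) *)
Definition quot_in_soc (J I : bset) : Prop :=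
  forall x, J x ->
    (forall y, cong I (lam x y) y) /\ (forall y, cong I (badd x y) (badd y x)).

(* J/I has prime order p: J has exactly p classes modulo I *)
Definition quot_prime_order (J I : bset) : Prop :=
  exists (p : nat) (l : list B),
    prime (Z.of_nat p) /\ length l = p /\
    (forall a, In a l -> J a) /\
    (forall j k, (j < p)%nat -> (k < p)%nat ->
       cong I (nth j l bzero) (nth k l bzero) -> j = k) /\
    (forall x, J x -> exists a, In a l /\ cong I x a).

Definition supersoluble : Prop :=
  exists (n : nat) (I : nat -> bset),
    (forall x, I O x <-> x = bzero) /\
    (forall x, I n x) /\
    (forall i, (i <= n)%nat -> ideal (I i)) /\
    (forall i, (i < n)%nat -> forall x, I i x -> I (S i) x) /\
    (forall i, (i < n)%nat ->
       (quot_inf_cyclic (I (S i)) (I i) /\ quot_in_soc (I (S i)) (I i))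
       \/ quot_prime_order (I (S i)) (I i)).

End BraceDefs.

From Stdlib Require Import ZArith List Znumtheory Lia.
From Stdlib Require Import Classical FunctionalExtensionality PropExtensionality.
Import ListNotations.
Open Scope nat_scope.

(* Let X generate B and let zeta_m(B) = B. Starting from X and -X, build words by
   iterating a * b := -b + λ_a(b), the same with a^-1, and the additive commutator.
   An operation applied to an element of zeta_(l+1) lands in zeta_l, so words of depth
   at least m vanish. Let F_k be the additive span of the words of depth at least k.
   The operations raise depth, and this propagates from words to all of F_k, because
   a + x = a (x d) with d one level deeper; hence F_0 is a subbrace, so F_0 = B, and
   F_k / F_(k+1) is central in B / F_(k+1). Any additive subgroup lying between an ideal
   I and the preimage of zeta(B/I) is an ideal, so adjoining the finitely many words of
   F_k to F_(k+1) one cyclic group at a time, and splitting each finite cyclic step along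
   prime divisors of its order, refines 0 = F_m <= ... <= F_0 = B into a series whose
   factors are infinite cyclic and in the socle, or of prime order. *)

Section BraceAlgebra.
Context {B : brace}.
Local Notation "a + b" := (@badd B a b).
Local Notation "- a" := (@bneg B a).
Local Notation "a * b" := (@bmul B a b).
Local Notation "0" := (@bzero B).
Local Notation lam := (lam B).

Lemma badd_assoc_r (a b c : B) : (a + b) + c = a + (b + c).
Proof. now rewrite badd_assoc. Qed.

Lemma badd_NKl (a b : B) : - a + (a + b) = b.
Proof. now rewrite badd_assoc, badd_Nl, badd_0l. Qed.

Lemma badd_KNl (a b : B) : a + (- a + b) = b.
Proof. now rewrite badd_assoc, badd_Nr, badd_0l. Qed.

Lemma badd_cancel_l (a b c : B) : a + b = a + c -> b = c.
Proof. intros H. now rewrite <- (badd_NKl a b), H, badd_NKl. Qed.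

Lemma bneg_unique (a b : B) : a + b = 0 -> b = - a.
Proof. intros H. apply (badd_cancel_l a). now rewrite H, badd_Nr. Qed.

Lemma bnegK (a : B) : - - a = a.
Proof. symmetry. apply bneg_unique, badd_Nl. Qed.

Lemma bneg_add (a b : B) : - (a + b) = - b + - a.
Proof. symmetry. apply bneg_unique. now rewrite badd_assoc_r, badd_KNl, badd_Nr. Qed.

Lemma bneg0 : - 0 = 0.
Proof. symmetry. apply bneg_unique, badd_0l. Qed.

Lemma bmul_cancel_l (a b c : B) : a * b = a * c -> b = c.
Proof.
  intros H. rewrite <- (bmul_1l _ b), <- (bmul_1l _ c), <- (bmul_Vl _ a), <- !bmul_assoc.
  now rewrite H.
Qed.

Lemma binv_unique (a b : B) : a * b = bone -> b = binv a.
Proof. intros H. apply (bmul_cancel_l a). now rewrite H, bmul_Vr. Qed.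

Lemma binvK (a : B) : binv (binv a) = a.
Proof. symmetry. apply binv_unique, bmul_Vl. Qed.

Lemma binv_mul (a b : B) : binv (a * b) = binv b * binv a.
Proof.
  symmetry. apply binv_unique.
  now rewrite <- bmul_assoc, (bmul_assoc _ b), bmul_Vr, bmul_1l, bmul_Vr.
Qed.

Lemma bmul_0r (a : B) : a * 0 = a.
Proof.
  pose proof (brace_law B a 0 0) as H. rewrite badd_0l in H.
  rewrite <- (badd_0r _ (a * 0)) in H at 1. apply badd_cancel_l in H.
  now rewrite <- (badd_KNl a (a * 0)), <- H, badd_0r.
Qed.

Lemma bone_zero : bone = 0 :> B.
Proof. now rewrite <- (bmul_0r bone), bmul_1l. Qed.

Lemma bmul_0l (a : B) : 0 * a = a.
Proof. rewrite <- bone_zero. apply bmul_1l. Qed.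

Lemma binv0 : binv 0 = 0.
Proof. symmetry. apply binv_unique. now rewrite bmul_0l, bone_zero. Qed.

Lemma bmul_lam (a b : B) : a * b = a + lam a b.
Proof. unfold lam. now rewrite badd_KNl. Qed.

Lemma lam_add (a b c : B) : lam a (b + c) = lam a b + lam a c.
Proof. unfold lam. now rewrite brace_law, !badd_assoc_r. Qed.

Lemma lam_0r (a : B) : lam a 0 = 0.
Proof. unfold lam. now rewrite bmul_0r, badd_Nl. Qed.

Lemma lam_0l (b : B) : lam 0 b = b.
Proof. unfold lam. now rewrite bneg0, badd_0l, bmul_0l. Qed.

Lemma lam_neg (a b : B) : lam a (- b) = - lam a b.
Proof. apply bneg_unique. now rewrite <- lam_add, badd_Nr, lam_0r. Qed.

Lemma lam_mul (a b c : B) : lam (a * b) c = lam a (lam b c).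
Proof.
  unfold lam at 3. rewrite lam_add, lam_neg. unfold lam.
  now rewrite bneg_add, bnegK, bmul_assoc, badd_assoc_r, badd_KNl.
Qed.

Lemma lam_inv_r (a b : B) : lam a (lam (binv a) b) = b.
Proof. now rewrite <- lam_mul, bmul_Vr, bone_zero, lam_0l. Qed.

Lemma lam_binv (a : B) : lam a (binv a) = - a.
Proof. unfold lam. now rewrite bmul_Vr, bone_zero, badd_0r. Qed.

Lemma binv_lam (a : B) : binv a = lam (binv a) (- a).
Proof. now rewrite <- (lam_binv a), <- lam_mul, bmul_Vl, bone_zero, lam_0l. Qed.

Lemma badd_as_bmul (a b : B) : a + b = a * lam (binv a) b.
Proof. now rewrite bmul_lam, lam_inv_r. Qed.

End BraceAlgebra.

Ltac bgroup := repeat (first [rewrite bneg_add | rewrite bnegK | rewrite bneg0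
  | rewrite badd_assoc_r | rewrite badd_0l | rewrite badd_0r | rewrite badd_NKl
  | rewrite badd_KNl | rewrite badd_Nl | rewrite badd_Nr]).

Section Centrality.
Context {B : brace}.
Local Notation "a + b" := (@badd B a b).
Local Notation "- a" := (@bneg B a).
Local Notation "a * b" := (@bmul B a b).
Local Notation "0" := (@bzero B).
Local Notation lam := (lam B).

Definition star (a b : B) : B := - b + lam a b.
Definition acomm (a b : B) : B := - (b + a) + (a + b).

Lemma lam_star (a b : B) : lam a b = b + star a b.
Proof. unfold star. now rewrite badd_KNl. Qed.

Lemma star_0l (b : B) : star 0 b = 0.
Proof. unfold star. now rewrite lam_0l, badd_Nl. Qed.

Lemma star_0r (a : B) : star a 0 = 0.
Proof. unfold star. now rewrite lam_0r, bneg0, badd_0l. Qed.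

Lemma star_mul (a b v : B) : star (a * b) v = star a v + (star b v + star a (star b v)).
Proof.
  unfold star at 1. rewrite lam_mul, (lam_star b v), lam_add, !lam_star. now bgroup.
Qed.

Lemma star_add_r (x g v : B) : star x (g + v) = (- v + star x g + v) + star x v.
Proof. unfold star. rewrite lam_add. now bgroup. Qed.

Lemma acomm_0l (b : B) : acomm 0 b = 0.
Proof. unfold acomm. now rewrite badd_0l, badd_0r, badd_Nl. Qed.

Lemma acomm_0r (a : B) : acomm a 0 = 0.
Proof. unfold acomm. now rewrite badd_0l, badd_0r, badd_Nl. Qed.

Lemma acomm_swap (a b : B) : acomm a b = - acomm b a.
Proof. unfold acomm. now bgroup. Qed.

Lemma acomm_add_l (e x y : B) : acomm (e + x) y = (- x + acomm e y + x) + acomm x y.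
Proof. unfold acomm. now bgroup. Qed.

Lemma acomm_add_r (e g y : B) : acomm e (g + y) = acomm e y + (- y + acomm e g + y).
Proof. unfold acomm. now bgroup. Qed.

Lemma conj_add (e g t : B) : - e + (g + t) + e = (g + acomm g e) + (- e + t + e).
Proof. unfold acomm. now bgroup. Qed.

Lemma bconj_mul (b x : B) : b * x * binv b = (b + lam b x + - b) + lam b (star x (binv b)).
Proof.
  rewrite (bmul_lam (b * x)), lam_mul, (bmul_lam b x), (lam_star x (binv b)) at 1.
  rewrite lam_add, lam_binv. now bgroup.
Qed.

Lemma add_subgroup_0 (I : bset B) : add_subgroup B I -> I 0.
Proof. now intros []. Qed.

Lemma add_subgroup_add (I : bset B) a b : add_subgroup B I -> I a -> I b -> I (a + b).
Proof. intros (_ & H & _). apply H. Qed.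

Lemma add_subgroup_neg (I : bset B) a : add_subgroup B I -> I a -> I (- a).
Proof. intros (_ & _ & H). apply H. Qed.

Lemma add_subgroup_neg_iff (I : bset B) a : add_subgroup B I -> I (- a) <-> I a.
Proof.
  intros HI. split; intros H; [rewrite <- bnegK|]; now apply add_subgroup_neg.
Qed.

Lemma add_subgroup_cancel_r (I : bset B) a b : add_subgroup B I -> I b -> I (a + b) -> I a.
Proof.
  intros HI Hb Hab. rewrite <- (badd_0r _ a), <- (badd_Nr _ b), badd_assoc.
  apply add_subgroup_add; auto. now apply add_subgroup_neg.
Qed.

(* The preimage of zeta(B/I); given the first two clauses, the third is equivalent to
   xy = yx modulo I (see zeta_mod_iff). *)
Definition central_mod (I : bset B) (x : B) : Prop :=
  (forall y, I (star x y)) /\ (forall y, I (acomm x y)) /\ (forall y, I (star y x)).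

Lemma zeta_mod_iff (I : bset B) x : add_subgroup B I -> zeta_mod B I x <-> central_mod I x.
Proof.
  intros HI.
  assert (Hcomm : forall y, - (y * x) + x * y = - star y x + (acomm x y + star x y)).
  { intros y. rewrite !bmul_lam, !lam_star. unfold acomm. now bgroup. }
  unfold zeta_mod, central_mod, cong.
  split; intros (Hs & Hc & Hm); repeat split; auto; intros y.
  - specialize (Hm y). rewrite Hcomm in Hm. rewrite <- (add_subgroup_neg_iff I); auto.
    apply (add_subgroup_cancel_r I _ (acomm x y + star x y) HI); [| exact Hm].
    apply add_subgroup_add; [exact HI | apply Hc | apply Hs].
  - rewrite Hcomm. apply add_subgroup_add; [| apply add_subgroup_neg |]; auto.
    now apply add_subgroup_add.
Qed.

Lemma central_mod_star_inv (I : bset B) x y :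
  add_subgroup B I -> central_mod I x -> I (star (binv x) y).
Proof.
  intros HI [Hs _]. specialize (Hs (lam (binv x) y)).
  unfold star in Hs. rewrite lam_inv_r in Hs. rewrite <- (add_subgroup_neg_iff I); auto.
  unfold star. now rewrite bneg_add, bnegK.
Qed.

Section Ideal.
Variable I : bset B.
Hypothesis HI : ideal B I.

Let HIadd : add_subgroup B I := proj1 (proj1 HI).

Lemma ideal_conj_add a x : I x -> I (a + x + - a).
Proof. apply HI. Qed.

Lemma ideal_lam a x : I x -> I (lam a x).
Proof. apply HI. Qed.

Lemma ideal_conj_add_neg a x : I x -> I (- a + x + a).
Proof. intros Hx. rewrite <- (bnegK a) at 2. now apply ideal_conj_add. Qed.

Lemma ideal_central x : I x -> central_mod I x.
Proof.
  intros Hx. repeat split; intros y.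
  - set (j := binv y * x * y).
    assert (Hj : I j).
    { unfold j. rewrite <- (binvK y) at 2. apply HI, Hx. }
    assert (E : x * y = y * j) by (unfold j; now rewrite !bmul_assoc, bmul_Vr, bmul_1l).
    unfold star, lam at 1. rewrite E, bmul_lam.
    replace (- y + (- x + (y + lam y j))) with ((- y + - x + y) + lam y j) by now bgroup.
    apply add_subgroup_add; auto.
    + apply ideal_conj_add_neg, add_subgroup_neg; auto.
    + now apply ideal_lam.
  - unfold acomm. replace (- (y + x) + (x + y)) with (- x + (- y + x + y)) by now bgroup.
    apply add_subgroup_add; auto.
    + now apply add_subgroup_neg.
    + now apply ideal_conj_add_neg.
  - unfold star. apply add_subgroup_add; auto.
    + now apply add_subgroup_neg.
    + now apply ideal_lam.
Qed.

Lemma ideal_star_shift a i y : I i -> I (star a y) -> I (star (a + i) y).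
Proof.
  intros Hi Ha. rewrite (badd_as_bmul a i), star_mul.
  assert (Hj : I (lam (binv a) i)) by now apply ideal_lam.
  destruct (ideal_central _ Hj) as (Hjy & _).
  destruct (ideal_central _ (Hjy y)) as (_ & _ & Hajy).
  apply add_subgroup_add; auto. now apply add_subgroup_add.
Qed.

Lemma central_mod_add x1 x2 : central_mod I x1 -> central_mod I x2 -> central_mod I (x1 + x2).
Proof.
  intros Hx1 Hx2. pose proof Hx1 as (S1 & C1 & R1). pose proof Hx2 as (S2 & C2 & R2).
  repeat split; intros y.
  - rewrite (badd_as_bmul x1 x2), star_mul, (lam_star (binv x1) x2).
    assert (Hw : I (star (x2 + star (binv x1) x2) y)).
    { apply ideal_star_shift; [apply central_mod_star_inv | apply S2]; auto. }
    apply add_subgroup_add; auto. now apply add_subgroup_add.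
  - rewrite acomm_add_l. apply add_subgroup_add; auto. now apply ideal_conj_add_neg.
  - rewrite star_add_r. apply add_subgroup_add; auto. now apply ideal_conj_add_neg.
Qed.

Lemma central_mod_neg x : central_mod I x -> central_mod I (- x).
Proof.
  intros Hx. pose proof Hx as (Sx & Cx & Rx).
  repeat split; intros y.
  - replace (- x) with (binv x + (x + star (binv x) x + - x)).
    + apply ideal_star_shift.
      * apply ideal_conj_add. now apply central_mod_star_inv.
      * now apply central_mod_star_inv.
    + rewrite binv_lam at 1. rewrite lam_neg. unfold star. now bgroup.
  - replace (acomm (- x) y) with (x + - acomm x y + - x) by (unfold acomm; now bgroup).
    apply ideal_conj_add, add_subgroup_neg; auto.
  - replace (star y (- x)) with (x + - star y x + - x)
      by (unfold star; rewrite lam_neg; now bgroup).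
    apply ideal_conj_add, add_subgroup_neg; auto.
Qed.

Lemma ideal_between (T : bset B) :
  add_subgroup B T -> (forall x, I x -> T x) -> (forall x, T x -> central_mod I x) -> ideal B T.
Proof.
  intros HT HIT HTc.
  assert (Hlam : forall b x, T x -> T (lam b x)).
  { intros b x Hx. rewrite lam_star. apply add_subgroup_add; auto. apply HIT, HTc, Hx. }
  assert (Hconj : forall b x, T x -> T (b + x + - b)).
  { intros b x Hx. replace (b + x + - b) with (x + acomm x (- b)) by (unfold acomm; now bgroup).
    apply add_subgroup_add; auto. apply HIT, HTc, Hx. }
  split; [split; [exact HT | repeat split] | repeat split]; auto.
  - rewrite bone_zero. now apply add_subgroup_0.
  - intros a b Ha Hb. rewrite bmul_lam. apply add_subgroup_add; auto.
  - intros a Ha. rewrite binv_lam, lam_star. apply add_subgroup_add.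
    + exact HT.
    + now apply add_subgroup_neg.
    + apply HIT, central_mod_star_inv; auto.
  - intros b x Hx. rewrite bconj_mul. apply add_subgroup_add; auto.
    apply HIT, ideal_lam, (HTc x Hx).
Qed.

Lemma zeta_mod_ideal : ideal B (zeta_mod B I).
Proof.
  apply ideal_between.
  - split; [|split].
    + apply zeta_mod_iff; auto. apply ideal_central, add_subgroup_0; auto.
    + intros a b Ha Hb. apply zeta_mod_iff in Ha, Hb; auto. apply zeta_mod_iff; auto.
      now apply central_mod_add.
    + intros a Ha. apply zeta_mod_iff in Ha; auto. apply zeta_mod_iff; auto.
      now apply central_mod_neg.
  - intros x Hx. apply zeta_mod_iff, ideal_central; auto.
  - intros x Hx. now apply zeta_mod_iff.
Qed.

End Ideal.

Lemma subbrace_of_lam_closed (S : bset B) : add_subgroup B S ->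
  (forall a b, S a -> S b -> S (lam a b) /\ S (lam (binv a) b)) -> subbrace B S.
Proof.
  intros HS Hlam. split; [exact HS | repeat split].
  - rewrite bone_zero. now apply add_subgroup_0.
  - intros a b Ha Hb. rewrite bmul_lam. apply add_subgroup_add; auto. now apply Hlam.
  - intros a Ha. rewrite binv_lam. apply Hlam; auto. now apply add_subgroup_neg.
Qed.

Lemma ideal_zero : ideal B (fun x => x = 0).
Proof.
  repeat split.
  - intros a b -> ->. apply badd_0l.
  - intros a ->. apply bneg0.
  - apply bone_zero.
  - intros a b -> ->. apply bmul_0l.
  - intros a ->. apply binv0.
  - intros a x ->. now rewrite badd_0r, badd_Nr.
  - intros a x ->. now rewrite bmul_0r, bmul_Vr, bone_zero.
  - intros b x ->. apply lam_0r.
Qed.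

Lemma zeta_ideal k : ideal B (zeta B k).
Proof.
  induction k as [|k IH].
  - exact ideal_zero.
  - now apply zeta_mod_ideal.
Qed.

Inductive word_op := OpStar | OpStarInv | OpComm.

Definition eval_op (o : word_op) (a b : B) : B :=
  match o with
  | OpStar => star a b
  | OpStarInv => star (binv a) b
  | OpComm => acomm a b
  end.

Lemma eval_op_0l o b : eval_op o 0 b = 0.
Proof. destruct o; simpl; rewrite ?binv0; auto using star_0l, acomm_0l. Qed.

Lemma eval_op_0r o a : eval_op o a 0 = 0.
Proof. destruct o; simpl; auto using star_0r, acomm_0r. Qed.

Lemma zeta_add_subgroup l : add_subgroup B (zeta B l).
Proof. apply zeta_ideal. Qed.

Lemma zeta_S_eval_op o l x b :
  zeta B (S l) x -> zeta B l (eval_op o x b) /\ zeta B l (eval_op o b x).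
Proof.
  intros Hx. apply zeta_mod_iff in Hx; [|apply zeta_add_subgroup].
  pose proof Hx as (Hs & Hc & Hr).
  destruct o; simpl; split.
  - apply Hs.
  - apply Hr.
  - apply central_mod_star_inv; [apply zeta_add_subgroup | exact Hx].
  - apply Hr.
  - apply Hc.
  - rewrite acomm_swap. apply add_subgroup_neg; [apply zeta_add_subgroup | apply Hc].
Qed.

Lemma zeta_eval_op o l x b :
  zeta B l x -> zeta B (pred l) (eval_op o x b) /\ zeta B (pred l) (eval_op o b x).
Proof.
  destruct l as [|l]; simpl.
  - intros ->. now rewrite eval_op_0l, eval_op_0r.
  - apply zeta_S_eval_op.
Qed.
End Centrality.

Section Span.
Context {B : brace}.
Local Notation "a + b" := (@badd B a b).
Local Notation "- a" := (@bneg B a).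
Local Notation "0" := (@bzero B).

Inductive span (L : list B) : bset B :=
| span_0 : span L 0
| span_cons e x : In e L -> span L x -> span L (e + x).

Lemma span_add L x y : span L x -> span L y -> span L (x + y).
Proof.
  intros Hx Hy. induction Hx as [|e x He Hx IH].
  - now rewrite badd_0l.
  - rewrite badd_assoc_r. now constructor.
Qed.

Lemma span_in L e : In e L -> span L e.
Proof. intros He. rewrite <- (badd_0r _ e). constructor; auto. constructor. Qed.

Lemma span_incl L L' x : incl L L' -> span L x -> span L' x.
Proof. intros H Hx. induction Hx; constructor; auto. Qed.

Lemma span_min (P : bset B) L x :
  add_subgroup B P -> (forall e, In e L -> P e) -> span L x -> P x.
Proof.
  intros HP HL Hx. induction Hx.
  - now apply add_subgroup_0.
  - apply add_subgroup_add; auto.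
Qed.

Lemma span_add_subgroup L : (forall e, In e L -> In (- e) L) -> add_subgroup B (span L).
Proof.
  intros HL. split; [constructor | split]; [apply span_add |].
  intros x Hx. induction Hx as [|e x He Hx IH].
  - rewrite bneg0. constructor.
  - rewrite bneg_add. apply span_add; auto. now apply span_in, HL.
Qed.

End Span.

Lemma nat_down_ind (m : nat) (P : nat -> Prop) :
  (forall k, m <= k -> P k) -> (forall k, P (S k) -> P k) -> forall k, P k.
Proof.
  intros Hbase Hstep k. assert (H : forall n k, m <= n + k -> P k).
  { induction n as [|n IH]; intros k' Hk; [now apply Hbase | apply Hstep, IH; lia]. }
  apply (H m k). lia.
Qed.

Section Filtration.
Context {B : brace}.
Local Notation "a + b" := (@badd B a b).
Local Notation "- a" := (@bneg B a).
Local Notation "a * b" := (@bmul B a b).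
Local Notation "0" := (@bzero B).
Local Notation lam := (lam B).

Variable gens : list B.
Variable m : nat.
Hypothesis Hm : forall x, zeta B m x.

(* Negatives keep the span a subgroup; both argument orders let [next_words] pair the
   newest layer with all earlier ones. *)
Definition pair_words (a b : B) : list B :=
  flat_map (fun o => [eval_op o a b; - eval_op o a b; eval_op o b a; - eval_op o b a])
    [OpStar; OpStarInv; OpComm].

Definition next_words (E L : list B) : list B :=
  flat_map (fun a => flat_map (pair_words a) L) E.

Fixpoint layers (i : nat) : list B * list B :=
  match i with
  | O => (gens ++ map bneg gens, gens ++ map bneg gens)
  | S i => let (E, L) := layers i in let E' := next_words E L in (E', L ++ E')
  end.

Definition words (i : nat) : list B := fst (layers i).
Definition words_upto (i : nat) : list B := snd (layers i).

Lemma words_S i : words (S i) = next_words (words i) (words_upto i).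
Proof. unfold words, words_upto. simpl. now destruct (layers i). Qed.

Lemma words_upto_S i : words_upto (S i) = words_upto i ++ words (S i).
Proof. unfold words, words_upto. simpl. now destruct (layers i). Qed.

Lemma in_words_upto i b : In b (words_upto i) <-> exists j, j <= i /\ In b (words j).
Proof.
  induction i as [|i IH].
  - split; [exists O; auto | intros [j [Hj Hb]]; now replace j with O in Hb by lia].
  - rewrite words_upto_S, in_app_iff, IH. split.
    + intros [[j [Hj Hb]] | Hb]; [exists j | exists (S i)]; split; auto; lia.
    + intros [j [Hj Hb]]. destruct (Nat.eq_dec j (S i)) as [-> | Hne]; auto.
      left. exists j. split; auto; lia.
Qed.

Lemma in_next_words c E L : In c (next_words E L) <->
  exists a b, In a E /\ In b L /\ In c (pair_words a b).
Proof.
  unfold next_words. rewrite in_flat_map. split.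
  - intros [a [Ha Hc]]. apply in_flat_map in Hc as [b [Hb Hc]]. now exists a, b.
  - intros (a & b & Ha & Hb & Hc). exists a. split; auto. apply in_flat_map. now exists b.
Qed.

Lemma in_pair_words c a b : In c (pair_words a b) <-> exists o,
  c = eval_op o a b \/ c = - eval_op o a b \/ c = eval_op o b a \/ c = - eval_op o b a.
Proof.
  unfold pair_words. rewrite in_flat_map. split.
  - intros [o [_ Hc]]. exists o. simpl in Hc. intuition.
  - intros [o Hc]. exists o. split; [destruct o; simpl; auto |]. simpl. intuition.
Qed.

Lemma words_eval_op o i j a b :
  In a (words i) -> In b (words j) -> In (eval_op o a b) (words (S (max i j))).
Proof.
  intros Ha Hb. rewrite words_S, in_next_words.
  destruct (Nat.le_ge_cases j i) as [Hji | Hij].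
  - rewrite Nat.max_l by lia. exists a, b. repeat split; auto.
    + apply in_words_upto. now exists j.
    + apply in_pair_words. exists o. auto.
  - rewrite Nat.max_r by lia. exists b, a. repeat split; auto.
    + apply in_words_upto. now exists i.
    + apply in_pair_words. exists o. auto.
Qed.

Lemma words_neg i a : In a (words i) -> In (- a) (words i).
Proof.
  destruct i as [|i].
  - unfold words; simpl. rewrite !in_app_iff, !in_map_iff.
    intros [Ha | [x [<- Hx]]]; [right; now exists a | left; now rewrite bnegK].
  - rewrite words_S, !in_next_words. intros (x & y & Hx & Hy & Ha).
    exists x, y. repeat split; auto. apply in_pair_words in Ha as [o Ha].
    apply in_pair_words. exists o. destruct Ha as [-> | [-> | [-> | ->]]]; rewrite ?bnegK; auto.
Qed.

Lemma words_zeta i a : In a (words i) -> zeta B (m - i) a.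
Proof.
  revert a. induction i as [|i IH]; intros a Ha.
  - rewrite Nat.sub_0_r. apply Hm.
  - rewrite words_S, in_next_words in Ha. destruct Ha as (x & y & Hx & Hy & Ha).
    apply in_pair_words in Ha as [o Ha].
    destruct (zeta_eval_op o (m - i) x y (IH x Hx)) as [Hxy Hyx].
    replace (m - S i) with (pred (m - i)) by lia.
    pose proof (zeta_add_subgroup (B := B) (pred (m - i))) as Hz.
    destruct Ha as [-> | [-> | [-> | ->]]]; auto; now apply add_subgroup_neg.
Qed.

(* Words of depth at least m are 0 by words_zeta, so the truncation does not change the span. *)
Definition deep_words (k : nat) : list B := flat_map words (seq k (m - k)).

Lemma in_deep_words k a : In a (deep_words k) <-> exists i, k <= i < m /\ In a (words i).
Proof.
  unfold deep_words. rewrite in_flat_map.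
  split; intros [i [Hi Ha]]; exists i; rewrite in_seq in *; split; auto; lia.
Qed.

Definition filt (k : nat) : bset B := span (deep_words k).

Lemma filt_add_subgroup k : add_subgroup B (filt k).
Proof.
  apply span_add_subgroup. intros e He. apply in_deep_words in He as [i [Hi He]].
  apply in_deep_words. exists i. split; auto. now apply words_neg.
Qed.

Lemma filt_antitone k k' x : k <= k' -> filt k' x -> filt k x.
Proof.
  intros Hk. apply span_incl. intros a Ha. apply in_deep_words in Ha as [i [Hi Ha]].
  apply in_deep_words. exists i. split; auto. lia.
Qed.

Lemma filt_trivial k x : m <= k -> filt k x -> x = 0.
Proof.
  intros Hk Hx. unfold filt, deep_words in Hx. replace (m - k) with O in Hx by lia.
  destruct Hx; [reflexivity | contradiction].
Qed.

Lemma filt_words k i a : k <= i -> In a (words i) -> filt k a.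
Proof.
  intros Hki Ha. destruct (le_lt_dec m i) as [Hmi | Him].
  - pose proof (words_zeta i a Ha) as Hz. replace (m - i) with O in Hz by lia.
    simpl in Hz. subst. constructor.
  - apply span_in, in_deep_words. exists i. auto.
Qed.

Lemma filt_eval_op o k j a b :
  In a (deep_words k) -> In b (deep_words j) -> filt (S (max k j)) (eval_op o a b).
Proof.
  intros Ha Hb. apply in_deep_words in Ha as [i [Hi Ha]], Hb as [i' [Hi' Hb]].
  apply (filt_words _ (S (max i i'))); [lia |]. now apply words_eval_op.
Qed.

Lemma filt_conj k t u : filt k t -> filt O u -> filt k (- u + t + u).
Proof.
  intros Ht Hu. revert t Ht. induction Hu as [|e u He Hu IH]; intros t Ht.
  - now rewrite bneg0, badd_0l, badd_0r.
  - replace (- (e + u) + t + (e + u)) with (- u + (- e + t + e) + u) by now bgroup.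
    apply IH. clear IH Hu u. induction Ht as [|g t Hg Ht IHt].
    + rewrite badd_0r, badd_Nl. constructor.
    + rewrite conj_add. apply span_add; auto. apply span_add; [now apply span_in |].
      apply (filt_antitone k (S (max k O))); [lia |]. now apply (filt_eval_op OpComm).
Qed.

(* λ_x fixes filt j modulo filt (S (max j k)). *)
Definition raises (k : nat) (x : B) : Prop :=
  forall j v, filt j v -> filt (S (max j k)) (star x v).

Definition biraises (k : nat) (x : B) : Prop := raises k x /\ raises k (binv x).

Lemma raises_of_deep_words k x :
  (forall j g, In g (deep_words j) -> filt (S (max j k)) (star x g)) -> raises k x.
Proof.
  intros H j v Hv. induction Hv as [|g v Hg Hv IH].
  - rewrite star_0r. constructor.
  - rewrite star_add_r. apply span_add; auto. apply filt_conj; auto.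
    apply (filt_antitone O j); auto with arith.
Qed.

Lemma raises_antitone k k' x : k <= k' -> raises k' x -> raises k x.
Proof. intros Hk Hx j v Hv. apply (filt_antitone _ (S (max j k'))); auto with arith. lia. Qed.

Lemma raises_mul k a b : raises k a -> raises k b -> raises k (a * b).
Proof.
  intros Ha Hb j v Hv. rewrite star_mul. pose proof (Hb j v Hv) as Hbv.
  apply span_add; [now apply Ha | apply span_add; auto].
  apply (filt_antitone _ (S (max (S (max j k)) k))); [lia |]. now apply Ha.
Qed.

Lemma biraises_antitone k k' x : k <= k' -> biraises k' x -> biraises k x.
Proof. intros Hk [H1 H2]. split; now apply (raises_antitone k k'). Qed.

Lemma biraises_mul k a b : biraises k a -> biraises k b -> biraises k (a * b).
Proof.
  intros [Ha Ha'] [Hb Hb']. split; [| rewrite binv_mul]; now apply raises_mul.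
Qed.

Lemma biraises_0 k : biraises k 0.
Proof. split; intros j v _; rewrite ?binv0, star_0l; constructor. Qed.

Lemma biraises_word k e : In e (deep_words k) -> biraises k e.
Proof.
  intros He. split; apply raises_of_deep_words; intros j g Hg; rewrite Nat.max_comm;
    [apply (filt_eval_op OpStar) | apply (filt_eval_op OpStarInv)]; auto.
Qed.

Lemma filt_biraises_step k :
  (forall y, filt (S k) y -> biraises (S k) y) -> forall x, filt k x -> biraises k x.
Proof.
  intros HS x Hx. induction Hx as [|e x He Hx IH]; [apply biraises_0 |].
  (* e + x = e (x d') with d' in filt (S k), and biraises k is closed under products. *)
  set (d := star (binv e) x).
  assert (Hd : filt (S k) d).
  { rewrite <- (Nat.max_id k) at 1. now apply (biraises_word k e He). }
  set (d' := lam (binv x) d).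
  assert (Hd' : filt (S k) d').
  { unfold d'. rewrite lam_star. apply span_add; auto.
    apply (filt_antitone _ (S (max (S k) k))); [lia |]. now apply IH. }
  replace (e + x) with (e * (x * d')).
  - apply biraises_mul; [now apply biraises_word |].
    apply biraises_mul; auto. apply (biraises_antitone k (S k)); auto.
  - rewrite (badd_as_bmul e x), (lam_star (binv e) x). fold d. now rewrite (badd_as_bmul x d).
Qed.

Lemma filt_biraises k x : filt k x -> biraises k x.
Proof.
  revert x. apply (nat_down_ind m (fun k => forall x, filt k x -> biraises k x));
    [clear k | exact filt_biraises_step].
  intros k Hk x Hx. rewrite (filt_trivial k x); auto. apply biraises_0.
Qed.

Hypothesis Hgen :
  forall T : bset B, subbrace B T -> (forall s, In s gens -> T s) -> forall x, T x.

Lemma filt0_full x : filt O x.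
Proof.
  apply Hgen.
  - apply subbrace_of_lam_closed; [apply filt_add_subgroup |].
    intros a b Ha Hb. destruct (filt_biraises O a Ha) as [Hs Hs'].
    split; rewrite lam_star; apply span_add; auto;
      apply (filt_antitone O 1); auto; [apply (Hs O) | apply (Hs' O)]; auto.
  - intros s Hs. apply (filt_words O O); auto. unfold words; simpl. apply in_or_app. now left.
Qed.

Lemma star_filt_l k x y : filt k x -> filt (S k) (star x y).
Proof. intros Hx. apply (proj1 (filt_biraises k x Hx) O), filt0_full. Qed.

Lemma star_filt_r k x y : filt k x -> filt (S k) (star y x).
Proof.
  intros Hx. rewrite <- (Nat.max_0_r k). apply (proj1 (filt_biraises O y (filt0_full y))), Hx.
Qed.

Lemma acomm_word_filt k e y : In e (deep_words k) -> filt (S k) (acomm e y).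
Proof.
  intros He. pose proof (filt0_full y) as Hy. induction Hy as [|g y Hg Hy IH].
  - rewrite acomm_0r. constructor.
  - rewrite acomm_add_r. apply span_add; auto. apply filt_conj; auto.
    rewrite <- (Nat.max_0_r k). now apply (filt_eval_op OpComm).
Qed.

Lemma acomm_filt k x y : filt k x -> filt (S k) (acomm x y).
Proof.
  intros Hx. induction Hx as [|e x He Hx IH].
  - rewrite acomm_0l. constructor.
  - rewrite acomm_add_l. apply span_add; auto. apply filt_conj; auto using filt0_full.
    now apply acomm_word_filt.
Qed.

Lemma filt_central k x : filt k x -> central_mod (filt (S k)) x.
Proof.
  intros Hx. repeat split; intros y.
  - now apply star_filt_l.
  - now apply acomm_filt.
  - now apply star_filt_r.
Qed.

Lemma filt_ideal k : ideal B (filt k).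
Proof.
  apply (nat_down_ind m (fun k => ideal B (filt k))); clear k; intros k.
  - intros Hk. apply (ideal_between (fun x => x = 0)); auto using ideal_zero, filt_add_subgroup.
    + intros x ->. constructor.
    + intros x Hx. rewrite (filt_trivial k x); auto. apply ideal_central; auto using ideal_zero.
  - intros IH. apply (ideal_between (filt (S k))); auto using filt_add_subgroup, filt_central.
    intros x. apply filt_antitone. auto.
Qed.

End Filtration.

Section Multiples.
Context {B : brace}.
Local Notation "a + b" := (@badd B a b).
Local Notation "- a" := (@bneg B a).
Local Notation "0" := (@bzero B).
Local Notation nmul := (nmul B).
Local Notation zmul := (zmul B).

Lemma nmul_comm n g : g + nmul n g = nmul n g + g.
Proof.
  induction n as [|n IH]; simpl; [now rewrite badd_0l, badd_0r |].
  now rewrite badd_assoc_r, <- IH.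
Qed.

Lemma zmul_of_nat n g : zmul (Z.of_nat n) g = nmul n g.
Proof. destruct n; simpl; [reflexivity | now rewrite SuccNat2Pos.id_succ]. Qed.

Lemma zmul_opp_of_nat n g : zmul (- Z.of_nat n)%Z g = - nmul n g.
Proof. destruct n; simpl; [now rewrite bneg0 | now rewrite SuccNat2Pos.id_succ]. Qed.

Lemma Z_nat_or_opp_nat (z : Z) : exists n, z = Z.of_nat n \/ z = (- Z.of_nat n)%Z.
Proof. exists (Z.abs_nat z). lia. Qed.

Lemma zmul_succ z g : zmul (z + 1)%Z g = zmul z g + g.
Proof.
  destruct (Z_nat_or_opp_nat z) as [n [-> | ->]].
  - replace (Z.of_nat n + 1)%Z with (Z.of_nat (S n)) by lia.
    rewrite !zmul_of_nat. apply nmul_comm.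
  - destruct n as [|n]; [simpl; now rewrite badd_0l, badd_0r |].
    replace (- Z.of_nat (S n) + 1)%Z with (- Z.of_nat n)%Z by lia.
    rewrite !zmul_opp_of_nat. simpl. now bgroup.
Qed.

Lemma zmul_pred z g : zmul (z - 1)%Z g = zmul z g + - g.
Proof.
  rewrite <- (badd_0r _ (zmul (z - 1)%Z g)), <- (badd_Nr _ g), badd_assoc, <- zmul_succ.
  now replace (z - 1 + 1)%Z with z by lia.
Qed.

Lemma zmul_add a b g : zmul (a + b)%Z g = zmul a g + zmul b g.
Proof.
  induction b as [|b IH|b IH] using Z.peano_ind.
  - now rewrite Z.add_0_r, badd_0r.
  - rewrite <- Z.add_1_r, Z.add_assoc, !zmul_succ, IH. now rewrite badd_assoc_r.
  - rewrite <- Z.sub_1_r, Z.add_sub_assoc, !zmul_pred, IH. now rewrite badd_assoc_r.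
Qed.

Lemma zmul_opp z g : zmul (- z)%Z g = - zmul z g.
Proof. apply bneg_unique. now rewrite <- zmul_add, Z.add_opp_diag_r. Qed.

Lemma zmul_mul a b g : zmul (a * b)%Z g = zmul a (zmul b g).
Proof.
  induction a as [|a IH|a IH] using Z.peano_ind; [reflexivity | |].
  - rewrite <- Z.add_1_r, Z.mul_add_distr_r, Z.mul_1_l, zmul_add, zmul_succ, IH.
    reflexivity.
  - rewrite <- Z.sub_1_r, Z.mul_sub_distr_r, Z.mul_1_l, <- Z.add_opp_r, zmul_add, zmul_pred,
      zmul_opp, IH.
    reflexivity.
Qed.

Lemma zmul_in (J : bset B) z g : add_subgroup B J -> J g -> J (zmul z g).
Proof.
  intros HJ Hg. induction z as [|z IH|z IH] using Z.peano_ind.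
  - exact (add_subgroup_0 J HJ).
  - rewrite <- Z.add_1_r, zmul_succ. now apply add_subgroup_add.
  - rewrite <- Z.sub_1_r, zmul_pred. apply add_subgroup_add; auto. now apply add_subgroup_neg.
Qed.
End Multiples.

Lemma zmul_order_cases {B : brace} (J : bset B) g : add_subgroup B J ->
  (forall z, J (zmul B z g) -> z = 0%Z) \/
  exists n, 1 <= n /\ forall z, J (zmul B z g) <-> (Z.of_nat n | z)%Z.
Proof.
  intros HJ. destruct (classic (exists z, z <> 0%Z /\ J (zmul B z g))) as [[z [Hz0 Hz]] | Hn].
  - right. set (P := fun n => 1 <= n /\ J (zmul B (Z.of_nat n) g)).
    assert (HP : exists n, P n).
    { exists (Z.abs_nat z). split; [lia |]. rewrite Zabs2Nat.id_abs.
      destruct (Z.le_gt_cases 0 z).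
      - now rewrite Z.abs_eq.
      - rewrite Z.abs_neq, zmul_opp by lia. now apply add_subgroup_neg. }
    destruct (Wf_nat.dec_inh_nat_subset_has_unique_least_element P (fun n => classic (P n)) HP)
      as [n [[[Hn1 Hn] Hmin] _]].
    exists n. split; auto. intros w. split.
    + intros Hw. apply Z.mod_divide; [lia |].
      assert (Hr : (0 <= w mod Z.of_nat n < Z.of_nat n)%Z) by (apply Z.mod_pos_bound; lia).
      assert (HJr : J (zmul B (w mod Z.of_nat n) g)).
      { rewrite Z.mod_eq, <- Z.add_opp_r, zmul_add, Z.mul_comm, <- Z.mul_opp_l, zmul_mul by lia.
        apply add_subgroup_add; auto. now apply zmul_in. }
      destruct (Z.eq_dec (w mod Z.of_nat n) 0) as [E | E]; auto.
      enough (n <= Z.to_nat (w mod Z.of_nat n)) by lia.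
      apply Hmin. split; [lia |]. now rewrite Z2Nat.id by lia.
    + intros [q ->]. rewrite zmul_mul. now apply zmul_in.
  - left. intros z Hz. apply NNPP. intros Hz0. apply Hn. now exists z.
Qed.

Lemma exists_prime_divisor (n : Z) : (1 < n)%Z -> exists p, prime p /\ (p | n)%Z.
Proof.
  intros Hn. assert (Hn0 : (0 <= n)%Z) by lia. revert Hn. pattern n.
  apply Z_lt_induction; [clear n Hn0; intros n IH Hn | exact Hn0].
  destruct (prime_dec n) as [Hp | Hp].
  - exists n. split; auto. apply Z.divide_refl.
  - destruct (not_prime_divide n Hn Hp) as [d [Hd Hdn]].
    destruct (IH d) as [p [Hp' Hpd]]; [lia | lia |].
    exists p. split; auto. eapply Z.divide_trans; eauto.
Qed.

Section Series.
Context {B : brace}.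
Local Notation "a + b" := (@badd B a b).
Local Notation "- a" := (@bneg B a).
Local Notation "0" := (@bzero B).
Local Notation zmul := (zmul B).

Definition series_step (J I : bset B) : Prop :=
  (quot_inf_cyclic B J I /\ quot_in_soc B J I) \/ quot_prime_order B J I.

Definition series (P Q : bset B) : Prop :=
  exists n (I : nat -> bset B), I O = P /\ I n = Q /\
    (forall i, i <= n -> ideal B (I i)) /\
    (forall i, i < n -> forall x, I i x -> I (S i) x) /\
    (forall i, i < n -> series_step (I (S i)) (I i)).

Lemma series_refl P : ideal B P -> series P P.
Proof.
  intros HP. exists O, (fun _ => P).
  split; [|split; [|split; [|split]]]; auto; intros i Hi; lia.
Qed.

Lemma series_single P Q :
  ideal B P -> ideal B Q -> (forall x, P x -> Q x) -> series_step Q P -> series P Q.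
Proof.
  intros HP HQ HPQ Hs. exists 1, (fun i => match i with O => P | _ => Q end).
  split; [|split; [|split; [|split]]]; auto; [intros [|i] _; auto | |];
    intros i Hi; now replace i with O by lia.
Qed.

Lemma series_trans P Q R : series P Q -> series Q R -> series P R.
Proof.
  intros (n1 & I1 & A1 & B1 & C1 & D1 & E1) (n2 & I2 & A2 & B2 & C2 & D2 & E2).
  exists (n1 + n2)%nat, (fun i => if i <=? n1 then I1 i else I2 (i - n1)).
  assert (Hglue : I1 n1 = I2 O) by congruence.
  assert (Hshift : forall i, n1 <= i -> (if i <=? n1 then I1 i else I2 (i - n1)) = I2 (i - n1)).
  { intros i Hi. destruct (Nat.leb_spec i n1); auto.
    replace i with n1 by lia. now rewrite Nat.sub_diag. }
  split; [|split; [|split; [|split]]].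
  - now simpl.
  - rewrite Hshift by lia. now replace (n1 + n2 - n1)%nat with n2 by lia.
  - intros i Hi. destruct (Nat.leb_spec i n1); [apply C1 | apply C2]; lia.
  - intros i Hi. destruct (Nat.leb_spec (S i) n1).
    + rewrite (proj2 (Nat.leb_le i n1)) by lia. apply D1. lia.
    + rewrite !Hshift by lia. replace (S i - n1) with (S (i - n1)) by lia. apply D2. lia.
  - intros i Hi. destruct (Nat.leb_spec (S i) n1).
    + rewrite (proj2 (Nat.leb_le i n1)) by lia. apply E1. lia.
    + rewrite !Hshift by lia. replace (S i - n1) with (S (i - n1)) by lia. apply E2. lia.
Qed.

Lemma bset_ext (P Q : bset B) : (forall x, P x <-> Q x) -> P = Q.
Proof.
  intros H. apply functional_extensionality. intros x. apply propositional_extensionality, H.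
Qed.

Section Refinement.
Variables I0 I1 : bset B.
Hypothesis HI0 : ideal B I0.
Hypothesis HI1 : add_subgroup B I1.
Hypothesis H01 : forall x, I0 x -> I1 x.
Hypothesis HI1c : forall x, I1 x -> central_mod I0 x.

Definition intermediate (T : bset B) : Prop :=
  add_subgroup B T /\ (forall x, I0 x -> T x) /\ (forall x, T x -> I1 x).

Lemma intermediate_ideal T : intermediate T -> ideal B T.
Proof. intros (HT & H0T & HT1). apply (ideal_between I0); auto. Qed.

Lemma intermediate_soc J K : intermediate J -> intermediate K -> quot_in_soc B K J.
Proof.
  intros (_ & HJ0 & _) (_ & _ & HK1) x Hx. destruct (HI1c x (HK1 x Hx)) as (Hs & Hc & _).
  split; intros y; apply HJ0; [apply Hs | apply Hc].
Qed.

Definition adjoin (J : bset B) (g : B) : bset B := fun a => exists z, J (- zmul z g + a).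

Lemma adjoin_incl J g x : intermediate J -> J x -> adjoin J g x.
Proof. intros HJ Hx. exists 0%Z. simpl. now rewrite bneg0, badd_0l. Qed.

Lemma adjoin_gen J g : intermediate J -> adjoin J g g.
Proof.
  intros (HJ & _). exists 1%Z. simpl. rewrite badd_0r, badd_Nl. now apply add_subgroup_0.
Qed.

Lemma intermediate_adjoin J g : intermediate J -> I1 g -> intermediate (adjoin J g).
Proof.
  intros HJ Hg. pose proof (intermediate_ideal J HJ) as HJi. pose proof HJ as (HJs & HJ0 & HJ1).
  split; [split; [|split] | split].
  - now apply adjoin_incl, add_subgroup_0.
  - intros a b [z Ha] [z' Hb]. exists (z + z')%Z. rewrite zmul_add.
    replace (- (zmul z g + zmul z' g) + (a + b))
      with ((- zmul z' g + (- zmul z g + a) + - - zmul z' g) + (- zmul z' g + b)) by now bgroup.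
    apply add_subgroup_add; auto. now apply ideal_conj_add.
  - intros a [z Ha]. exists (- z)%Z. rewrite zmul_opp.
    replace (- - zmul z g + - a) with (zmul z g + - (- zmul z g + a) + - zmul z g) by now bgroup.
    apply ideal_conj_add; auto. now apply add_subgroup_neg.
  - intros x Hx. apply adjoin_incl; auto.
  - intros x [z Hx]. replace x with (zmul z g + (- zmul z g + x)) by now bgroup.
    apply add_subgroup_add; auto. now apply zmul_in.
Qed.

Lemma adjoin_of_mem J g : intermediate J -> J g -> adjoin J g = J.
Proof.
  intros HJ Hg. apply bset_ext. intros x. split; [| now apply adjoin_incl].
  intros [z Hz]. replace x with (zmul z g + (- zmul z g + x)) by now bgroup.
  apply add_subgroup_add; [apply HJ | apply zmul_in; [apply HJ | exact Hg] | exact Hz].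
Qed.

Lemma series_adjoin_inf J g : intermediate J -> I1 g ->
  (forall z, J (zmul z g) -> z = 0%Z) -> series J (adjoin J g).
Proof.
  intros HJ Hg Hord. pose proof (intermediate_adjoin J g HJ Hg) as HE.
  apply series_single; auto using intermediate_ideal, adjoin_incl.
  left. split; [| now apply intermediate_soc].
  exists g. split; [now apply adjoin_gen |]. split; [| exact Hord].
  intros x [z Hz]. now exists z.
Qed.

Lemma nth_map_seq (f : nat -> B) n i : i < n -> nth i (map f (seq O n)) 0 = f i.
Proof.
  intros Hi. rewrite (nth_indep _ 0 (f O)) by (rewrite length_map, length_seq; lia).
  now rewrite map_nth, seq_nth by lia.
Qed.

Lemma adjoin_prime_step J g p q : intermediate J -> I1 g -> prime p -> (1 <= q)%Z ->
  (forall z, J (zmul z g) <-> (p * q | z)%Z) ->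
  quot_prime_order B (adjoin J g) (adjoin J (zmul p g)).
Proof.
  intros HJ Hg Hp Hq Hord. pose proof (prime_ge_2 p Hp) as Hp2.
  exists (Z.to_nat p), (map (fun i => zmul (Z.of_nat i) g) (seq O (Z.to_nat p))).
  split; [now rewrite Z2Nat.id by lia |].
  split; [now rewrite length_map, length_seq |].
  split; [| split].
  - intros a Ha. apply in_map_iff in Ha as [i [<- _]].
    exists (Z.of_nat i). rewrite badd_Nl. apply add_subgroup_0, HJ.
  - intros j k Hj Hk [z Hz]. rewrite !nth_map_seq in Hz by lia.
    rewrite <- zmul_mul, <- !zmul_opp, <- !zmul_add, Hord in Hz.
    assert (Hpd : (p | Z.of_nat j - Z.of_nat k)%Z).
    { destruct Hz as [c Hc]. exists (c * q + z)%Z. lia. }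
    destruct Hpd as [c Hc]. assert (c = 0%Z) by nia. lia.
  - intros x [z Hz]. pose proof (Z.mod_pos_bound z p ltac:(lia)) as Hr.
    exists (zmul (z mod p) g). split.
    + apply in_map_iff. exists (Z.to_nat (z mod p)).
      rewrite Z2Nat.id, in_seq by lia. split; auto; lia.
    + exists (z / p)%Z. rewrite <- zmul_mul.
      replace (- zmul (z / p * p) g + (- zmul (z mod p) g + x))
        with (- (zmul (z mod p) g + zmul (z / p * p) g) + x) by now bgroup.
      rewrite <- zmul_add. now replace (z mod p + z / p * p)%Z with z by (rewrite Z.mod_eq; lia).
Qed.

Lemma series_adjoin_fin n : forall J g, intermediate J -> I1 g -> 1 <= n ->
  (forall z, J (zmul z g) <-> (Z.of_nat n | z)%Z) -> series J (adjoin J g).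
Proof.
  induction n as [n IH] using lt_wf_ind. intros J g HJ Hg Hn Hord.
  destruct (Nat.eq_dec n 1) as [-> | Hn1].
  - rewrite adjoin_of_mem; auto using series_refl, intermediate_ideal.
    rewrite <- (badd_0r _ g). apply (Hord 1%Z), Z.divide_refl.
  - destruct (exists_prime_divisor (Z.of_nat n)) as [p [Hp [q Hq]]]; [lia |].
    pose proof (prime_ge_2 p Hp) as Hp2.
    assert (Hq1 : (1 <= q)%Z) by nia.
    rewrite Hq, Z.mul_comm in Hord.
    assert (Hordp : forall z, J (zmul z (zmul p g)) <-> (Z.of_nat (Z.to_nat q) | z)%Z).
    { intros z. rewrite <- zmul_mul, Hord, Z2Nat.id, (Z.mul_comm z p) by lia.
      apply Z.mul_divide_cancel_l. lia. }
    apply (series_trans _ (adjoin J (zmul p g))).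
    + apply (IH (Z.to_nat q)); auto; [nia | now apply zmul_in | lia].
    + assert (Hpg : I1 (zmul p g)) by now apply zmul_in.
      apply series_single; auto using intermediate_ideal, intermediate_adjoin.
      * intros x [z Hz]. exists (z * p)%Z. now rewrite zmul_mul.
      * right. now apply (adjoin_prime_step J g p q).
Qed.

Lemma series_adjoin J g : intermediate J -> I1 g -> series J (adjoin J g).
Proof.
  intros HJ Hg. destruct (zmul_order_cases J g (proj1 HJ)) as [H | [n [Hn H]]].
  - now apply series_adjoin_inf.
  - now apply (series_adjoin_fin n).
Qed.

Lemma series_adjoin_list L : forall J, intermediate J -> (forall g, In g L -> I1 g) ->
  exists J', series J J' /\ intermediate J' /\ (forall x, J x -> J' x) /\
    (forall g, In g L -> J' g).
Proof.
  induction L as [|g L IH]; intros J HJ HL.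
  - exists J. split; [now apply series_refl, intermediate_ideal |].
    split; [exact HJ | split; [auto | intros g []]].
  - assert (Hg : I1 g) by (apply HL; now left).
    pose proof (intermediate_adjoin J g HJ Hg) as HE.
    destruct (IH (adjoin J g) HE (fun h Hh => HL h (or_intror Hh)))
      as (J' & HS & HJ' & Hinc & HLJ').
    exists J'. split; [| split; [exact HJ' | split]].
    + apply (series_trans _ (adjoin J g)); auto. now apply series_adjoin.
    + intros x Hx. apply Hinc, adjoin_incl; auto.
    + intros h [<- | Hh]; auto. now apply Hinc, adjoin_gen.
Qed.

Lemma series_of_span L : (forall x, I1 x <-> span L x) -> series I0 I1.
Proof.
  intros HL.
  destruct (series_adjoin_list L I0) as (J & HS & (HJ & _ & HJ1) & _ & HLJ).
  - split; [apply HI0 | split; auto].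
  - intros g Hg. now apply HL, span_in.
  - replace I1 with J; auto. apply bset_ext. intros x. split; auto.
    intros Hx. now apply (span_min J L), HL.
Qed.

End Refinement.
End Series.

Lemma series_filt {B : brace} gens m :
  (forall x, zeta B m x) ->
  (forall T : bset B, subbrace B T -> (forall s, In s gens -> T s) -> forall x, T x) ->
  forall n k, series (filt gens m (n + k)) (filt gens m k).
Proof.
  intros Hm Hgen. induction n as [|n IH]; intros k.
  - apply series_refl, filt_ideal; auto.
  - apply (series_trans _ (filt gens m (S k))).
    { replace (S n + k) with (n + S k) by lia. apply IH. }
    apply series_of_span with (L := deep_words gens m k).
    + now apply filt_ideal.
    + apply filt_add_subgroup.
    + intros x. apply filt_antitone. lia.
    + now apply filt_central.
    + reflexivity.
Qed.

Theorem theorem3p6 (B : brace) :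
  fin_gen B -> centrally_nilpotent B -> supersoluble B.
Proof.
  intros [gens Hgen] [m Hm].
  assert (Hseries := series_filt gens m Hm Hgen m O). rewrite Nat.add_0_r in Hseries.
  replace (filt gens m m) with (fun x : B => x = bzero) in Hseries.
  2: { apply bset_ext. intros x. split; [intros -> ; constructor | apply filt_trivial; auto]. }
  replace (filt gens m O) with (fun _ : B => True) in Hseries.
  2: { apply bset_ext. intros x. split; auto. intros _. now apply filt0_full. }
  destruct Hseries as (n & I & H0 & Hn & Hid & Hinc & Hstep).
  exists n, I. rewrite H0, Hn. split; [reflexivity | auto].
Qed.
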